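(* Let $T$ be a tree with positive edge weights rooted at the homebase $r$, and let $q\ge 0$. In every cost-optimal strategy exploring $T$, if an agent enters a subtree $T_v$ (for a vertex $v$), then it explores (i.e., is the first to visit) at least one leaf of $T_v$.
   Context: Exploration model: given a connected graph with positive edge weights, a homebase vertex, and invoking cost $q\ge 0$, a strategy is a sequence of moves, each either invoking a new agent (appearing at the homebase) or an agent traversing an edge incident to its current vertex. A vertex is explored when first visited; the strategy explores the graph when every vertex has been visited by some agent (agents need not return). With $k$ agents, agent $i$ traversing total distance $d_i$ (weights counted with multiplicity), the cost is $kq+\sum_i d_i$; a strategy is cost-optimal if it explores the graph with minimum cost (off-line setting, graph known). For a rooted tree, $T_v$ denotes the subtree consisting of $v$ and its descendants; a leaf is a non-root vertex with no children. *)

From HB Require Import structures.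
From mathcomp Require Import all_boot all_order all_algebra.
From mathcomp Require Import reals.
Set Implicit Arguments. Unset Strict Implicit. Unset Printing Implicit Defensive.
Import Order.TTheory GRing.Theory Num.Theory.
Local Open Scope ring_scope.

Section Explore.
Variables (V : finType) (e : rel V) (r : V).

Definition simple_graph : Prop := symmetric e /\ irreflexive e.
Definition graph_connected : Prop := forall x y : V, connect e x y.
Definition graph_acyclic : Prop :=
  forall c : seq V, uniq c -> (2 < size c)%N -> ~~ cycle e c.
Definition is_tree : Prop := [/\ simple_graph, graph_connected & graph_acyclic].

(* u lies in T_v (v and its descendants w.r.t. root r): v lies on every
   walk from r to u, i.e. on the r-u path of the tree. *)
Definition in_subtree (v u : V) : Prop :=
  forall p : seq V, path e r p -> last r p = u -> v \in r :: p.

(* leaf: non-root vertex with no children (a child of x is a neighbour in T_x) *)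
Definition is_leaf (x : V) : Prop :=
  x <> r /\ ~ (exists y, e x y /\ in_subtree x y).

(* Invoke: a new agent appears at r (agents are numbered 0,1,2,... in order
   of invocation); Step i u: agent i traverses the edge from its current
   vertex to u. *)
Inductive move := Invoke | Step of nat & V.

Fixpoint valid_from (pos : seq V) (s : seq move) : bool :=
  match s with
  | [::] => true
  | Invoke :: s' => valid_from (rcons pos r) s'
  | Step i u :: s' =>
      [&& (i < size pos)%N, e (nth r pos i) u & valid_from (set_nth r pos i u) s']
  end.
Definition valid (s : seq move) : bool := valid_from [::] s.

Fixpoint trace_from (pos : seq V) (s : seq move) : seq (nat * V * V) :=
  match s with
  | [::] => [::]
  | Invoke :: s' => trace_from (rcons pos r) s'
  | Step i u :: s' => (i, nth r pos i, u) :: trace_from (set_nth r pos i u) s'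
  end.
Definition trace (s : seq move) := trace_from [::] s.

Definition is_invoke (m : move) : bool := if m is Invoke then true else false.
Definition n_agents (s : seq move) : nat := count is_invoke s.

Definition visited (s : seq move) (x : V) : bool :=
  if x == r then has is_invoke s else has (fun t => t.2 == x) (trace s).

Definition explores_graph (s : seq move) : Prop := forall x, visited s x.

(* agent i explores x: it is the first agent to visit x *)
Definition explores (s : seq move) (i : nat) (x : V) : bool :=
  if x == r then (i == 0%N) && has is_invoke s
  else let tr := trace s in
       has (fun t => t.2 == x) tr &&
       ((nth (0%N, r, r) tr (find (fun t => t.2 == x) tr)).1.1 == i).

Definition enters (s : seq move) (i : nat) (v : V) : Prop :=
  exists x u, (i, x, u) \in trace s /\ ~ in_subtree v x /\ in_subtree v u.

Variable R : realType.
Variables (w : V -> V -> R) (q : R).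

Definition cost (s : seq move) : R :=
  q * (n_agents s)%:R + \sum_(t <- trace s) w t.1.2 t.2.

Definition cost_optimal (s : seq move) : Prop :=
  [/\ valid s, explores_graph s &
      forall s', valid s' -> explores_graph s' -> cost s <= cost s'].

End Explore.

From HB Require Import structures.
From mathcomp Require Import all_boot all_order all_algebra.
From mathcomp Require Import reals boolp.
Import Order.TTheory GRing.Theory Num.Theory.

Set Implicit Arguments.
Unset Strict Implicit.
Unset Printing Implicit Defensive.

(* Suppose agent [i] enters T_v but explores no leaf of T_v, and delete every
   traversal of agent [i] with an endpoint in T_v.  In a tree, T_v is attached
   to the rest only through the edge from v to its parent p, so the pruned
   agent can wait at p whenever the original one is inside T_v: the pruned
   strategy stays valid.  It still explores the tree.  A vertex outside T_v
   reached only by a deleted move is p, which agent [i] had reached before.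
   A vertex x inside T_v lies on every walk from the root to a leaf below x;
   that leaf is explored by an agent other than [i], whose moves are all kept.
   The pruned strategy has the same agents and strictly fewer traversals,
   contradicting optimality. *)

Section Subtrees.
Variables (V : finType) (e : rel V) (r : V).
Local Notation in_subtree := (in_subtree e r).

Lemma in_subtree_root v : in_subtree v r -> v = r.
Proof. by move/(_ [::] erefl erefl); rewrite inE => /eqP. Qed.

Lemma in_subtree_refl x : in_subtree x x.
Proof. by move=> p _ <-; apply: mem_last. Qed.

Lemma in_subtree_trans a b c : in_subtree a b -> in_subtree b c -> in_subtree a c.
Proof.
move=> ab bc p ep pc; have bp := bc p ep pc.
case/splitPl: bp ep => p1 p2 p1b.
rewrite cat_path => /andP[ep1 _].
by rewrite -cat_cons mem_cat (ab p1 ep1 p1b).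
Qed.

Lemma subtree_avoiding_path v x : ~ in_subtree v x ->
  exists p, [/\ path e r p, last r p = x & v \notin r :: p].
Proof.
move=> vx; apply: contrapT => no_path; apply: vx => p ep px.
by apply: contrapT => vp; apply: no_path; exists p; split => //; apply/negP.
Qed.

Lemma in_subtree_edge v x u : e x u -> ~ in_subtree v x -> in_subtree v u -> u = v.
Proof.
move=> xu /subtree_avoiding_path[p [ep px vp]] /(_ (rcons p u)).
rewrite rcons_path ep px xu last_rcons -rcons_cons mem_rcons inE => /(_ erefl erefl).
by rewrite (negbTE vp) orbF => /eqP.
Qed.

Hypothesis tree : is_tree e.

Lemma in_subtree_antisym a b : in_subtree a b -> in_subtree b a -> a = b.
Proof.
have [_ connected _] := tree.
move=> ab ba; case/connectP: (connected r b) => p0 ep0 b_last.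
case: (shortenP ep0) b_last => p ep up _ /esym pb {p0 ep0}.
have ap := ab p ep pb; case/splitPl: ap ep up pb => p1 p2 p1a.
rewrite cat_path last_cat p1a => /andP[ep1 _].
case: p2 => [_ /= -> //|z p2].
rewrite -cat_cons cat_uniq => /and3P[_ /hasP no_common _] p2b.
exfalso; apply: no_common; exists b; first by rewrite -p2b last_cons mem_last.
exact: ba p1 ep1 p1a.
Qed.

Lemma exists_leaf_below x : x <> r -> exists2 l, is_leaf e r l & in_subtree x l.
Proof.
have [[_ e_irr] _ _] := tree.
move=> xr; pose below y := [set z | `[< in_subtree y z >]].
case: (@arg_minnP _ x (fun y => `[< in_subtree x y >]) (fun y => #|below y|)).
  exact/asboolP/in_subtree_refl.
move=> l /asboolP xl l_min; exists l => //; split.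
  by move=> lr; apply: xr; apply: in_subtree_root; rewrite lr in xl.
case=> y [ly l_y]; have := l_min y (asboolT (in_subtree_trans xl l_y)).
rewrite leqNgt => /negP; apply; apply: proper_card; apply/properP; split.
  apply/subsetP => z; rewrite !inE => /asboolP yz.
  exact/asboolP/(in_subtree_trans l_y yz).
exists l; rewrite inE; first exact/asboolP/in_subtree_refl.
by apply/asboolP => /(in_subtree_antisym l_y) yl; rewrite yl e_irr in ly.
Qed.

Lemma subtree_avoiding_uniq_path v x y : ~ in_subtree v x -> ~ in_subtree v y ->
  exists q, [/\ path e x q, last x q = y, uniq (x :: q) & v \notin x :: q].
Proof.
have [[e_sym _] _ _] := tree.
pose ev := [rel a b | [&& e a b, a != v & b != v]].
have ev_sym : symmetric ev by move=> a b; rewrite /= e_sym [(a != v) && _]andbC.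
have from_root z : ~ in_subtree v z -> connect ev r z.
  case/subtree_avoiding_path => p [ep pz vp]; apply/connectP; exists p => //.
  apply: (sub_in_path (P := predC1 v)) ep => [a b /[!inE] av bv eab|].
    by rewrite /= eab av bv.
  by apply/allP => a ap /=; apply: contraNneq vp => <-.
move=> vx vy; have: connect ev x y.
  by rewrite (connect_trans _ (from_root y vy)) // sym_connect_sym // from_root.
case/connectP => p evp y_last; case: (shortenP evp) y_last => q evq uq _ /esym qy.
exists q; split => //; first by apply: sub_path evq => a b /andP[].
rewrite inE negb_or; apply/andP; split.
  by apply: contra_not_neq vx => <-; apply: in_subtree_refl.
elim: q x {vx evp uq qy} evq => //= z q IHq a /andP[/and3P[_ _ zv] /IHq].
by rewrite inE negb_or eq_sym zv.
Qed.

Lemma subtree_parent_unique v x y :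
  e x v -> ~ in_subtree v x -> e y v -> ~ in_subtree v y -> x = y.
Proof.
have [[e_sym _] _ acyclic] := tree.
move=> xv vx yv vy; apply/eqP; apply: contraT => xy.
have [q [exq qy uq vq]] := subtree_avoiding_uniq_path vx vy.
have long : (2 < size (v :: x :: q))%N.
  by case: q {exq uq vq} qy => [/= yx|] //; rewrite yx eqxx in xy.
have := acyclic (v :: x :: q); rewrite cons_uniq vq uq => /(_ isT long).
by rewrite /= rcons_path e_sym xv exq qy yv.
Qed.

End Subtrees.

Section Strategies.
Variables (V : finType) (e : rel V) (r : V).
Implicit Types (pos : seq V) (s : seq (move V)) (tr : seq (nat * V * V)).

Lemma trace_from_edge pos s :
  valid_from e r pos s -> {in trace_from r pos s, forall t, e t.1.2 t.2}.
Proof.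
elim: s pos => [|[|j u] s IHs] pos //=; first exact: IHs.
by case/and3P=> _ eju /IHs IH t /predU1P[->|/IH].
Qed.

Definition visits tr j y := has (fun t => (t.1.1 == j) && (t.2 == y)) tr.

Definition walked tr j x :=
  exists p, [/\ path e r p, last r p = x & {in p, forall y, visits tr j y}].

Lemma walked_root tr j : walked tr j r.
Proof. by exists [::]. Qed.

Lemma walked_catr tr tr' j x : walked tr j x -> walked (tr ++ tr') j x.
Proof.
case=> p [ep px visp]; exists p; split => // y /visp.
by rewrite /visits has_cat => ->.
Qed.

Lemma walked_rcons tr j x u :
  walked tr j x -> e x u -> walked (rcons tr (j, x, u)) j u.
Proof.
case=> p [ep px visp] xu; exists (rcons p u).
rewrite rcons_path ep px xu last_rcons; split => // y.
rewrite mem_rcons inE /visits -cats1 has_cat => /predU1P[->|/visp].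
  by rewrite /= !eqxx orbT.
by rewrite /visits => ->.
Qed.

Lemma walked_trace_from pos s tr : valid_from e r pos s ->
  (forall j, walked tr j (nth r pos j)) ->
  {in trace_from r pos s, forall t, walked (tr ++ trace_from r pos s) t.1.1 t.2}.
Proof.
elim: s pos tr => [|[|j u] s IHs] pos tr //=.
  move=> val walk; apply: IHs => // k; rewrite nth_rcons.
  by case: ifP => _; [apply: walk | case: ifP => _; apply: walked_root].
case/and3P=> _ eju val walk.
have walk' k : walked (rcons tr (j, nth r pos j, u)) k (nth r (set_nth r pos j u) k).
  rewrite nth_set_nth /=; case: eqP => [->|_]; first exact: walked_rcons.
  by rewrite -cats1; apply: walked_catr.
move=> t /predU1P[->|t_tr]; last by rewrite -cat_rcons; apply: IHs.
by rewrite -cat_rcons; apply/walked_catr/walked_rcons.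
Qed.

Lemma walked_trace s :
  valid e r s -> {in trace r s, forall t, walked (trace r s) t.1.1 t.2}.
Proof.
move=> val; apply: (walked_trace_from (tr := [::])) => // j.
by rewrite nth_nil; apply: walked_root.
Qed.

Lemma explorer_exists s x : x != r -> visited r s x ->
  exists2 t, t \in trace r s & t.2 = x /\ explores r s t.1.1 x.
Proof.
rewrite /visited /explores => /negbTE -> vis; rewrite vis.
exists (nth (0%N, r, r) (trace r s) (find (fun t => t.2 == x) (trace r s))).
  by apply: mem_nth; rewrite -has_find.
by split; [apply/eqP; apply: (nth_find _ vis) | rewrite eqxx].
Qed.

End Strategies.

Local Open Scope ring_scope.

Lemma sumr_filter_lt (R : numDomainType) (T : eqType) (l : seq T) (P : pred T)
    (F : T -> R) t0 :
  {in l, forall t, 0 < F t} -> t0 \in l -> ~~ P t0 ->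
  \sum_(t <- l | P t) F t < \sum_(t <- l) F t.
Proof.
move=> F_gt0 t0_l Pt0; rewrite [X in _ < X](bigID P) /= ltrDl big_seq_cond.
have ge0 t : (t \in l) && ~~ P t -> 0 <= F t by case/andP => /F_gt0/ltW.
rewrite lt_def psumr_neq0 // sumr_ge0 // andbT.
by apply/hasP; exists t0; rewrite ?t0_l ?Pt0 ?F_gt0.
Qed.

Section Pruning.
Variables (V : finType) (e : rel V) (r : V) (i : nat) (inT : pred V) (p0 : V).
Implicit Types (pos : seq V) (s : seq (move V)) (tr : seq (nat * V * V)).

Definition kept (t : nat * V * V) := ~~ ((t.1.1 == i) && (inT t.1.2 || inT t.2)).

(* [pos] holds the positions of the agents in the original strategy. *)
Fixpoint prune pos s : seq (move V) :=
  match s with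
  | [::] => [::]
  | Invoke :: s' => Invoke V :: prune (rcons pos r) s'
  | Step j u :: s' =>
      if kept (j, nth r pos j, u) then Step j u :: prune (set_nth r pos j u) s'
      else prune (set_nth r pos j u) s'
  end.

Definition pruned s := prune [::] s.

Lemma count_invoke_prune pos s :
  count (@is_invoke V) (prune pos s) = count (@is_invoke V) s.
Proof.
by elim: s pos => [|[|j u] s IHs] pos //=; [|case: ifP => _ /=]; rewrite IHs.
Qed.

Lemma n_agents_pruned s : n_agents (pruned s) = n_agents s.
Proof. exact: count_invoke_prune. Qed.

Definition collapse y := if inT y then p0 else y.

Hypothesis root_out : ~~ inT r.
Hypothesis collapse_edge : forall x u, e x u -> inT x || inT u -> collapse x = collapse u.

Lemma collapse_out y : ~~ inT y -> collapse y = y.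
Proof. by rewrite /collapse => /negbTE ->. Qed.

Definition collapsed pos pos' := size pos' = size pos /\
  forall j, nth r pos' j = if j == i then collapse (nth r pos j) else nth r pos j.

Lemma collapsed_rcons pos pos' :
  collapsed pos pos' -> collapsed (rcons pos r) (rcons pos' r).
Proof.
case=> size_pos nth_pos; split=> [|k]; first by rewrite !size_rcons size_pos.
rewrite !nth_rcons !if_same size_pos nth_pos.
by case: ifP => // _; case: ifP => // _; rewrite collapse_out.
Qed.

Lemma collapsed_set_kept pos pos' j u : collapsed pos pos' -> kept (j, nth r pos j, u) ->
  nth r pos' j = nth r pos j /\ collapsed (set_nth r pos j u) (set_nth r pos' j u).
Proof.
case=> size_pos nth_pos; rewrite /kept /= negb_and negb_or => kept_j.
have out_if_i : j = i -> ~~ inT (nth r pos j) && ~~ inT u.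
  by move=> ji; move: kept_j; rewrite ji eqxx.
split; first by rewrite nth_pos; case: eqP => // /out_if_i/andP[/collapse_out].
split=> [|k]; first by rewrite !size_set_nth size_pos.
rewrite !nth_set_nth /= nth_pos; case: (eqVneq k j) => // ->.
by case: eqP => // /out_if_i/andP[_ /collapse_out].
Qed.

Lemma collapsed_set_dropped pos pos' j u : collapsed pos pos' -> (j < size pos)%N ->
  e (nth r pos j) u -> ~~ kept (j, nth r pos j, u) -> collapsed (set_nth r pos j u) pos'.
Proof.
case=> size_pos nth_pos j_pos eju /negPn/andP[/= /eqP ji dropped]; subst j.
split=> [|k]; first by rewrite size_set_nth size_pos (maxn_idPr j_pos).
rewrite nth_pos nth_set_nth /=; case: eqP => // ->.
exact: collapse_edge.
Qed.

Lemma prune_valid_from pos pos' s : collapsed pos pos' -> valid_from e r pos s ->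
  valid_from e r pos' (prune pos s) /\
  trace_from r pos' (prune pos s) = filter kept (trace_from r pos s).
Proof.
elim: s pos pos' => [|[|j u] s IHs] pos pos' coll_pos //=.
  exact/IHs/collapsed_rcons.
case/and3P=> j_pos eju val; case: ifP => kept_j /=.
  have [nth_j coll'] := collapsed_set_kept coll_pos kept_j.
  have [val' trace'] := IHs _ _ coll' val.
  by rewrite nth_j val' trace' coll_pos.1 j_pos eju.
by apply: IHs val; apply: collapsed_set_dropped; rewrite ?kept_j.
Qed.

Lemma pruned_valid s : valid e r s ->
  valid e r (pruned s) /\ trace r (pruned s) = filter kept (trace r s).
Proof.
apply: prune_valid_from; split=> // j.
by rewrite nth_nil collapse_out // if_same.
Qed.

Definition seen tr y := (y == r) || has (fun t => t.2 == y) tr.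

Lemma seen_catr tr tr' y : seen tr y -> seen (tr ++ tr') y.
Proof. by rewrite /seen has_cat => /orP[-> | ->]; rewrite ?orbT. Qed.

Lemma seen_dropped_exit pos s tr :
  valid_from e r pos s -> seen tr (collapse (nth r pos i)) ->
  {in trace_from r pos s, forall t, t.1.1 = i -> ~~ inT t.2 ->
    seen (tr ++ filter kept (trace_from r pos s)) t.2}.
Proof.
elim: s pos tr => [|[|j u] s IHs] pos tr //=.
  move=> val seen_i; apply: IHs => //; rewrite nth_rcons if_same.
  by case: ifP => // _; rewrite collapse_out // /seen eqxx.
case/and3P=> _ eju val seen_i.
have seen_u tr' : seen (rcons tr (j, nth r pos j, u) ++ tr') u.
  by rewrite /seen has_cat has_rcons eqxx !orbT.
case: ifP => kept_j t; rewrite inE => /predU1P[-> /= ji uT|t_tr ti tT].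
- by rewrite -cat_rcons.
- rewrite -cat_rcons; apply: IHs => //; rewrite nth_set_nth /=.
  case: eqP => [ij|_]; last by rewrite -cats1; apply: seen_catr.
  move: kept_j; rewrite /kept /= ij eqxx /= negb_or => /andP[_ uT].
  by rewrite collapse_out //; move: (seen_u [::]); rewrite cats0.
- subst j; move/negbT: kept_j; rewrite /kept /= eqxx negbK => yuT.
  by rewrite -(collapse_out uT) -(collapse_edge eju yuT); apply: seen_catr.
- apply: IHs => //; rewrite nth_set_nth /=; case: eqP => // ij; subst j.
  move/negbT: kept_j; rewrite /kept /= eqxx negbK => yuT.
  by rewrite -(collapse_edge eju yuT).
Qed.

Lemma visited_pruned_out s x :
  valid e r s -> ~~ inT x -> visited r s x -> visited r (pruned s) x.
Proof.
move=> val xT; rewrite /visited; case: eqP => [_|/eqP xr].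
  by rewrite !has_count (count_invoke_prune [::] s).
case/hasP=> t t_tr /eqP tx; rewrite (pruned_valid val).2.
have [kept_t|dropped_t] := boolP (kept t).
  by apply/hasP; exists t; rewrite ?mem_filter ?kept_t ?tx.
have ti : t.1.1 = i by move: dropped_t => /negPn/andP[/eqP].
have seen_root : seen [::] (collapse (nth r [::] i)).
  by rewrite nth_nil collapse_out // /seen eqxx.
have := seen_dropped_exit val seen_root t_tr ti; rewrite tx => /(_ xT).
by rewrite /seen (negbTE xr).
Qed.

Lemma mem_trace_pruned s t : valid e r s -> t \in trace r s -> t.1.1 != i ->
  t \in trace r (pruned s).
Proof.
by move=> val t_tr ti; rewrite (pruned_valid val).2 mem_filter t_tr /kept (negbTE ti).
Qed.

Lemma cost_pruned_lt (R : realType) (w : V -> V -> R) (q : R) s t0 : valid e r s ->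
  {in trace r s, forall t, 0 < w t.1.2 t.2} -> t0 \in trace r s -> ~~ kept t0 ->
  cost r w q (pruned s) < cost r w q s.
Proof.
move=> val w_gt0 t0_tr dropped_t0.
rewrite /cost n_agents_pruned (pruned_valid val).2 big_filter ltrD2l.
exact: sumr_filter_lt dropped_t0.
Qed.

End Pruning.

Section SubtreePruning.
Variables (V : finType) (e : rel V) (r : V) (v x0 : V).
Hypothesis tree : is_tree e.
Hypothesis x0_out : ~ in_subtree e r v x0.
Hypothesis x0v : e x0 v.

Definition in_subtreeb y := `[< in_subtree e r v y >].

Lemma subtree_root_out : ~~ in_subtreeb r.
Proof.
apply/asboolP => /in_subtree_root vr; apply: x0_out => p _ _.
by rewrite vr mem_head.
Qed.

Lemma subtree_collapse_edge x u : e x u -> in_subtreeb x || in_subtreeb u ->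
  collapse in_subtreeb x0 x = collapse in_subtreeb x0 u.
Proof.
have [[e_sym _] _ _] := tree.
have enter y z : e y z -> ~~ in_subtreeb y -> in_subtreeb z -> y = x0.
  move=> yz /asboolP vy /asboolP vz; have zv := in_subtree_edge yz vy vz; subst z.
  exact: subtree_parent_unique yz vy x0v x0_out.
rewrite /collapse; case: (boolP (in_subtreeb x)) => xT.
  by case: (boolP (in_subtreeb u)) => uT //= ux _; rewrite (enter u x) // e_sym.
by case: (boolP (in_subtreeb u)) => uT //= xu _; apply: enter xu xT uT.
Qed.

Variables (s : seq (move V)) (i : nat).
Hypothesis s_valid : valid e r s.
Hypothesis s_explores : explores_graph r s.
Hypothesis no_leaf : forall l, is_leaf e r l -> in_subtree e r v l -> ~~ explores r s i l.

Lemma pruned_explores : explores_graph r (pruned r i in_subtreeb s).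
Proof.
move=> x; have [/asboolP vx|xT] := boolP (in_subtreeb x); last first.
  have := visited_pruned_out i subtree_root_out subtree_collapse_edge s_valid xT.
  by apply; apply: s_explores.
have xr : x != r by apply: contraNneq subtree_root_out => <-; apply/asboolP.
have [l leaf xl] := exists_leaf_below tree (elimN eqP xr).
have lr : l != r by apply/eqP; case: leaf.
have [t t_tr [tl t_expl]] := explorer_exists lr (s_explores l).
have ti : t.1.1 != i.
  by apply: contraNneq (no_leaf leaf (in_subtree_trans vx xl)) => <-.
have [p [ep pl visp]] := walked_trace s_valid t_tr.
have := xl p ep (etrans pl tl); rewrite inE (negbTE xr) => /visp /hasP[t' t'_tr].
case/andP=> /eqP t't /eqP t'x; rewrite /visited (negbTE xr); apply/hasP; exists t'.
  apply: (mem_trace_pruned subtree_root_out subtree_collapse_edge s_valid t'_tr).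
  by rewrite t't.
by rewrite t'x.
Qed.

End SubtreePruning.

Theorem mainTheorem4 (V : finType) (e : rel V) (r : V) (R : realType)
    (w : V -> V -> R) (q : R) :
  is_tree e ->
  (forall x y, w x y = w y x) ->
  (forall x y, e x y -> 0 < w x y) ->
  0 <= q ->
  forall s : seq (move V), cost_optimal e r w q s ->
  forall (i : nat) (v : V), enters e r s i v ->
  exists x : V, [/\ is_leaf e r x, in_subtree e r v x & explores r s i x].
Proof.
move=> tree _ w_gt0 _ s [s_valid s_explores s_opt] i v [x0 [u0 [entry [x0_out u0_in]]]].
apply: contrapT => no_leaf.
have {}no_leaf l : is_leaf e r l -> in_subtree e r v l -> ~~ explores r s i l.
  by move=> leaf vl; apply/negP => expl; apply: no_leaf; exists l.
have x0u0 : e x0 u0 := trace_from_edge s_valid entry.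
have u0v := in_subtree_edge x0u0 x0_out u0_in; subst u0.
have root_out := subtree_root_out x0_out.
have collapse_edge := subtree_collapse_edge tree x0_out x0u0.
have dropped : ~~ kept i (in_subtreeb e r v) (i, x0, v).
  by rewrite /kept /= eqxx negbK /in_subtreeb (asboolT u0_in) orbT.
have w_tr : {in trace r s, forall t, 0 < w t.1.2 t.2}.
  by move=> t /(trace_from_edge s_valid) /w_gt0.
have := s_opt _ (pruned_valid i root_out collapse_edge s_valid).1
  (pruned_explores tree x0_out x0u0 s_valid s_explores no_leaf).
by rewrite leNgt (cost_pruned_lt root_out collapse_edge q s_valid w_tr entry dropped).
Qed.
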